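(* Let $p,q\ge 3$ be relatively prime odd integers. Then $$p\sum_{n=1}^{q-1}\frac{\cot(\pi np/q)\cot(\pi n/q)}{\cos^2(\pi n/q)}+q\sum_{n=1}^{p-1}\frac{\cot(\pi nq/p)\cot(\pi n/p)}{\cos^2(\pi n/p)}=\frac{1}{3}\left(p^2+q^2-2\right).$$ *)

From Stdlib Require Import Reals Lra Lia ZArith Znumtheory.
Open Scope R_scope.

Definition cot (x : R) : R := cos x / sin x.

Fixpoint sum_upto (f : nat -> R) (N : nat) : R :=
  match N with
  | O => 0
  | S k => sum_upto f k + f N
  end.
(* sum_upto f N = f 1 + ... + f N *)

(* With x = exp(2 pi i n / q), each summand of the first sum is -4 x (x^p + 1) / ((x^p - 1)(x^2 - 1)).
   The partial fraction expansion of (x^p + 1)/(x^p - 1) over the p-th roots of unity z splits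
   p times this kernel into x/(x - 1)^2 plus cross terms in (x, z).  The cross terms of the two
   sums cancel in pairs up to products with x/(x^2 - 1), whose sum over the nontrivial roots of
   unity of odd order vanishes by x <-> 1/x symmetry.  What remains is the classical sum of
   x/(x - 1)^2 over the nontrivial N-th roots of unity, -(N^2 - 1)/12, for N = q and N = p. *)

From Stdlib Require Import Reals ZArith Lra Lia.
From Coquelicot Require Import Complex.
Open Scope R_scope.

Definition expi (t : R) : C := (cos t, sin t).

Open Scope C_scope.

Lemma expi_add a b : expi a * expi b = expi (a + b).
Proof. unfold expi, Cmult; simpl. rewrite cos_plus, sin_plus. f_equal; ring. Qed.

Lemma expi_0 : expi 0 = 1.
Proof. unfold expi, RtoC. rewrite cos_0, sin_0. reflexivity. Qed.

Lemma expi_pow t n : expi t ^ n = expi (INR n * t).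
Proof.
  induction n as [|n IH].
  - rewrite Rmult_0_l, expi_0. reflexivity.
  - rewrite Cpow_S, IH, expi_add, S_INR. f_equal. ring.
Qed.

Lemma expi_neq0 t : expi t <> 0.
Proof.
  unfold expi, RtoC. intro E. injection E as Ec Es.
  pose proof (sin2_cos2 t) as H. rewrite Ec, Es in H. unfold Rsqr in H. lra.
Qed.

Lemma expi_2PI_int (k : Z) : expi (2 * PI * IZR k) = 1.
Proof.
  unfold expi, RtoC.
  assert (Hs : sin (IZR k * PI) = 0%R) by (apply sin_eq_0_1; eauto).
  replace (2 * PI * IZR k)%R with (2 * (IZR k * PI))%R by ring.
  rewrite cos_2a_sin, sin_2a, Hs. f_equal; ring.
Qed.

Lemma expi_eq1 t : expi t = 1 -> exists k : Z, t = (2 * PI * IZR k)%R.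
Proof.
  unfold expi, RtoC. intro E. injection E as Ec Es.
  assert (Hc : cos t = (1 - 2 * sin (t / 2) ^ 2)%R).
  { replace t with (2 * (t / 2))%R at 1 by field. rewrite cos_2a_sin. ring. }
  assert (Hs : sin (t / 2) = 0%R) by nra.
  destruct (sin_eq_0_0 _ Hs) as [k Hk]. exists k. lra.
Qed.

Lemma expi_inj a b : expi a = expi b -> exists k : Z, (a - b = 2 * PI * IZR k)%R.
Proof.
  intro E. apply expi_eq1.
  unfold Rminus. rewrite <- expi_add, E, expi_add, Rplus_opp_r. apply expi_0.
Qed.

Lemma expi_double_add1 a : expi (2 * a) + 1 = RtoC (2 * cos a) * expi a.
Proof. unfold expi, RtoC, Cplus, Cmult. simpl. rewrite cos_2a_cos, sin_2a. f_equal; ring. Qed.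

Lemma expi_double_sub1 a : expi (2 * a) - 1 = RtoC (2 * sin a) * Ci * expi a.
Proof.
  unfold expi, RtoC, Cminus, Cplus, Copp, Cmult, Ci. simpl.
  rewrite cos_2a_sin, sin_2a. f_equal; ring.
Qed.

Lemma sin_neq0_of_expi a : expi (2 * a) <> 1 -> sin a <> 0%R.
Proof.
  intros H E. apply H, Ceq_minus. rewrite expi_double_sub1, E, Rmult_0_r. ring.
Qed.

Definition root (N j : nat) : C := expi (2 * PI * INR j / INR N).

Lemma root_0 N : root N 0 = 1.
Proof. unfold root. rewrite Rmult_0_r, Rdiv_0_l. apply expi_0. Qed.

Lemma root_pow N j m : root N j ^ m = root N (j * m).
Proof. unfold root. rewrite expi_pow, mult_INR. f_equal. unfold Rdiv. ring. Qed.

Lemma root_pow_comm N j m : root N j ^ m = root N m ^ j.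
Proof. rewrite !root_pow, Nat.mul_comm. reflexivity. Qed.

Lemma root_pow_order N j : (0 < N)%nat -> root N j ^ N = 1.
Proof.
  intro HN. unfold root. rewrite expi_pow, <- (expi_2PI_int (Z.of_nat j)).
  f_equal. rewrite <- INR_IZR_INZ. field. apply not_0_INR. lia.
Qed.

Lemma root_mul_reflect N j : (j <= N)%nat -> (0 < N)%nat -> root N (N - j) * root N j = 1.
Proof.
  intros Hj HN. unfold root. rewrite expi_add, <- (expi_2PI_int 1), minus_INR by exact Hj.
  f_equal. field. apply not_0_INR. lia.
Qed.

Lemma root_eq_dvd N M j m : (0 < N)%nat -> (0 < M)%nat ->
  root N j = root M m -> Nat.divide N (j * M).
Proof.
  intros HN HM E. destruct (expi_inj _ _ E) as [k Hk].
  assert (HN' : INR N <> 0%R) by (apply not_0_INR; lia).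
  assert (HM' : INR M <> 0%R) by (apply not_0_INR; lia).
  assert (HR : (2 * PI * (INR j * INR M - INR N * (INR m + IZR k * INR M)) = 0)%R).
  { replace (2 * PI * (INR j * INR M - INR N * (INR m + IZR k * INR M)))%R
      with (INR N * INR M * (2 * PI * INR j / INR N - 2 * PI * INR m / INR M - 2 * PI * IZR k))%R
      by (field; auto).
    rewrite Hk. ring. }
  assert (HZ : (Z.of_nat j * Z.of_nat M = Z.of_nat N * (Z.of_nat m + k * Z.of_nat M))%Z).
  { apply eq_IZR. rewrite !mult_IZR, plus_IZR, mult_IZR, <- !INR_IZR_INZ.
    pose proof PI_RGT_0. apply Rmult_integral in HR as [HR | HR]; lra. }
  exists (Z.to_nat (Z.of_nat m + k * Z.of_nat M)). nia.
Qed.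

Lemma coprime_not_dvd N p j : (0 < j < N)%nat -> Nat.gcd N p = 1%nat -> ~ Nat.divide N (j * p).
Proof.
  intros Hj Hg D. rewrite Nat.mul_comm in D.
  destruct (Nat.gauss _ _ _ D Hg) as [[|c] Hc]; simpl in Hc; lia.
Qed.

Lemma odd_gcd_2 N : Nat.odd N = true -> Nat.gcd N 2 = 1%nat.
Proof.
  intro Ho. apply Nat.odd_spec in Ho as [t ->].
  rewrite Nat.gcd_comm. replace (2 * t + 1)%nat with (1 + t * 2)%nat by lia.
  rewrite Nat.gcd_add_mult_diag_r. apply Nat.divide_1_r, Nat.gcd_divide_r.
Qed.

Section PrimitiveRoot.

Variables (N j : nat).
Hypothesis Hj : (0 < j < N)%nat.

Lemma root_neq_root M m : (0 < M)%nat -> Nat.gcd N M = 1%nat -> root N j <> root M m.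
Proof.
  intros HM Hg E. apply (coprime_not_dvd N M j Hj Hg), (root_eq_dvd _ _ _ m); [lia | lia | exact E].
Qed.

Lemma root_pow_neq1 p : Nat.gcd N p = 1%nat -> root N j ^ p <> 1.
Proof.
  intros Hg E. rewrite root_pow, <- (root_0 1) in E.
  apply root_eq_dvd in E; try lia. rewrite Nat.mul_1_r in E. exact (coprime_not_dvd N p j Hj Hg E).
Qed.

Lemma root_neq1 : root N j <> 1.
Proof. rewrite <- (Cpow_1_r (root N j)). apply root_pow_neq1, Nat.divide_1_r, Nat.gcd_divide_r. Qed.

Lemma root_sq_neq1 : Nat.odd N = true -> root N j ^ 2 <> 1.
Proof. intro Ho. apply root_pow_neq1, odd_gcd_2, Ho. Qed.

End PrimitiveRoot.

Fixpoint csum (f : nat -> C) (N : nat) : C :=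
  match N with O => 0 | S k => csum f k + f k end.

Lemma csum_S f N : csum f (S N) = csum f N + f N.
Proof. reflexivity. Qed.

Lemma csum_ext f g N : (forall k, (k < N)%nat -> f k = g k) -> csum f N = csum g N.
Proof.
  induction N as [|N IH]; intro H; simpl; [reflexivity|].
  rewrite IH by (intros; apply H; lia). rewrite H by lia. reflexivity.
Qed.

Lemma csum_add f g N : csum (fun k => f k + g k) N = csum f N + csum g N.
Proof. induction N as [|N IH]; simpl; [ring|]. rewrite IH. ring. Qed.

Lemma csum_scal_l c f N : csum (fun k => c * f k) N = c * csum f N.
Proof. induction N as [|N IH]; simpl; [ring|]. rewrite IH. ring. Qed.

Lemma csum_const c N : csum (fun _ => c) N = INR N * c.
Proof.
  induction N as [|N IH]; simpl csum; [simpl; ring|].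
  rewrite IH, S_INR, RtoC_plus. ring.
Qed.

Lemma csum_swap (f : nat -> nat -> C) N M :
  csum (fun i => csum (fun j => f i j) M) N = csum (fun j => csum (fun i => f i j) N) M.
Proof.
  induction N as [|N IH]; simpl.
  - rewrite csum_const. ring.
  - rewrite IH, <- csum_add. reflexivity.
Qed.

Lemma csum_mul_csum a b N M :
  csum (fun n => csum (fun m => a n * b m) M) N = csum a N * csum b M.
Proof.
  rewrite (csum_ext _ (fun n => a n * csum b M)) by (intros; apply csum_scal_l).
  rewrite (csum_ext _ (fun n => csum b M * a n)) by (intros; ring).
  rewrite csum_scal_l. ring.
Qed.

Lemma csum_shift f N : csum f (S N) = f O + csum (fun k => f (S k)) N.
Proof.
  induction N as [|N IH]; [simpl; ring|].
  rewrite csum_S, IH. simpl. ring.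
Qed.

Lemma csum_rev f N : csum (fun k => f (N - 1 - k)%nat) N = csum f N.
Proof.
  induction N as [|N IH]; [reflexivity|].
  rewrite csum_shift. simpl csum at 2. rewrite <- IH.
  rewrite (csum_ext (fun k => f (S N - 1 - S k)%nat) (fun k => f (N - 1 - k)%nat))
    by (intros; f_equal; lia).
  replace (S N - 1 - 0)%nat with N by lia. ring.
Qed.

Lemma csum_RtoC_sum_upto f N : RtoC (sum_upto f N) = csum (fun k => RtoC (f (S k))) N.
Proof. induction N as [|N IH]; simpl; [reflexivity|]. rewrite RtoC_plus, IH. reflexivity. Qed.

Lemma sub1_mul_geom_sum r N : (r - 1) * csum (Cpow r) N = r ^ N - 1.
Proof. induction N as [|N IH]; simpl; [ring|]. rewrite Cmult_plus_distr_l, IH. ring. Qed.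

Lemma geom_sum_eq0 r N : r ^ N = 1 -> r <> 1 -> csum (Cpow r) N = 0.
Proof.
  intros HN H1. assert (Hr : r - 1 <> 0) by (apply Cminus_eq_contra, H1).
  rewrite <- (Cmult_1_l (csum _ N)), <- (Cinv_l _ Hr), <- Cmult_assoc, sub1_mul_geom_sum, HN.
  ring.
Qed.

Lemma sum_roots_pow N m : (0 < m < N)%nat -> csum (fun j => root N j ^ m) N = 0.
Proof.
  intro Hm. rewrite (csum_ext _ (Cpow (root N m))) by (intros; apply root_pow_comm).
  apply geom_sum_eq0; [apply root_pow_order; lia | apply root_neq1, Hm].
Qed.

Lemma sum_nontrivial_roots_pow N m : (0 < N)%nat ->
  csum (fun n => root N (S n) ^ m) (N - 1) = csum (fun j => root N j ^ m) N - 1.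
Proof.
  intro HN. destruct N as [|N]; [lia|].
  rewrite csum_shift, root_0, Cpow_1_l, Nat.sub_1_r. simpl pred. ring.
Qed.

Lemma pow_sub_pow x y n : x ^ n - y ^ n = (x - y) * csum (fun m => x ^ (n - 1 - m) * y ^ m) n.
Proof.
  induction n as [|n IH]; [simpl; ring|].
  cbn [csum]. replace (S n - 1 - n)%nat with 0%nat by lia.
  rewrite (csum_ext _ (fun m => x * (x ^ (n - 1 - m) * y ^ m))).
  2:{ intros m Hm. replace (S n - 1 - m)%nat with (S (n - 1 - m)) by lia. simpl. ring. }
  rewrite csum_scal_l.
  transitivity (x * (x ^ n - y ^ n) + (x - y) * y ^ n); [simpl; ring|].
  rewrite IH. simpl. ring.
Qed.

Lemma sum_root_div p x : (0 < p)%nat -> x ^ p <> 1 ->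
  csum (fun j => root p j / (x - root p j)) p = INR p / (x ^ p - 1).
Proof.
  intros Hp Hx. assert (Hx1 : x ^ p - 1 <> 0) by (apply Cminus_eq_contra, Hx).
  (* Since z^p = 1, dividing x^p - z^p by x - z expands z/(x - z) as a polynomial in z; after
     summing over z, only the powers z^p survive. *)
  rewrite (csum_ext _ (fun j => / (x ^ p - 1) * csum (fun m => x ^ (p - 1 - m) * root p j ^ S m) p)).
  2:{ intros j _. set (z := root p j).
      assert (Hfac := pow_sub_pow x z p).
      rewrite (root_pow_order p j Hp : z ^ p = 1) in Hfac.
      assert (Hxz : x - z <> 0) by (intro E; apply Hx1; rewrite Hfac, E; ring).
      assert (Hs : csum (fun m => x ^ (p - 1 - m) * z ^ m) p <> 0)
        by (intro E; apply Hx1; rewrite Hfac, E; ring).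
      rewrite (csum_ext _ (fun m => z * (x ^ (p - 1 - m) * z ^ m))) by (intros; rewrite Cpow_S; ring).
      rewrite csum_scal_l, Hfac. field. auto. }
  rewrite csum_scal_l, csum_swap.
  rewrite (csum_ext _ (fun m => x ^ (p - 1 - m) * csum (fun j => root p j ^ S m) p))
    by (intros; apply csum_scal_l).
  destruct p as [|p]; [lia|]. rewrite csum_S.
  rewrite (csum_ext _ (fun _ => 0)).
  2:{ intros m Hm. rewrite sum_roots_pow by lia. ring. }
  rewrite (csum_ext (fun j => root (S p) j ^ S p) (fun _ => 1)) by (intros; apply root_pow_order; lia).
  rewrite csum_const, csum_const. replace (S p - 1 - p)%nat with 0%nat by lia.
  simpl. field. exact Hx1.
Qed.

Lemma coth_partial_fractions p x : (0 < p)%nat -> x ^ p <> 1 ->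
  INR p * ((x ^ p + 1) / (x ^ p - 1)) = csum (fun j => (x + root p j) / (x - root p j)) p.
Proof.
  intros Hp Hx. assert (Hx1 : x ^ p - 1 <> 0) by (apply Cminus_eq_contra, Hx).
  rewrite (csum_ext _ (fun j => 1 + 2 * (root p j / (x - root p j)))).
  2:{ intros j Hj. assert (Hxz : x - root p j <> 0).
      { intro E. apply Hx. apply Ceq_minus in E. rewrite E. apply root_pow_order, Hp. }
      field. exact Hxz. }
  rewrite csum_add, csum_const, csum_scal_l, sum_root_div by assumption. field. exact Hx1.
Qed.

Lemma sub1_mul_sum_id_pow Z N :
  (Z - 1) * csum (fun k => INR k * Z ^ k) N = INR N * Z ^ N - csum (Cpow Z) (S N) + 1.
Proof.
  induction N as [|N IH]; [simpl; ring|].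
  rewrite !csum_S, Cmult_plus_distr_l, IH, csum_S, S_INR, RtoC_plus. simpl. ring.
Qed.

Lemma sub1_mul_sum_sq_pow Z N :
  (Z - 1) * csum (fun k => INR k ^ 2 * Z ^ k) N
  = (INR N - 1) ^ 2 * Z ^ N + csum (fun k => (1 - 2 * INR k) * Z ^ k) N - 1.
Proof.
  induction N as [|N IH]; [simpl; ring|].
  rewrite !csum_S, Cmult_plus_distr_l, IH, S_INR, RtoC_plus. simpl. ring.
Qed.

(* The coefficients have constant second difference, which makes
   (Z - 1)^2 * sum_k frac_coef N k * Z^(k+1) collapse to 2 N Z when Z^N = 1. *)
Definition frac_coef (N k : nat) : R := (INR N - 2) * INR k - INR k ^ 2.

Lemma div_sub1_sq_expansion N Z : (0 < N)%nat -> Z ^ N = 1 -> Z <> 1 ->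
  Z / (Z - 1) ^ 2 = / (2 * INR N) * csum (fun k => frac_coef N k * Z ^ S k) N.
Proof.
  intros HN HZ HZ1.
  assert (G : csum (Cpow Z) N = 0) by (apply geom_sum_eq0; assumption).
  set (u := csum (fun k => INR k * Z ^ k) N).
  set (V := csum (fun k => INR k ^ 2 * Z ^ k) N).
  assert (Hu : (Z - 1) * u = INR N).
  { unfold u. rewrite sub1_mul_sum_id_pow, csum_S, G, HZ. ring. }
  assert (HV : (Z - 1) * V = (INR N - 1) ^ 2 - 2 * u - 1).
  { unfold V. rewrite sub1_mul_sum_sq_pow, HZ.
    rewrite (csum_ext _ (fun k => Z ^ k + -2 * (INR k * Z ^ k))) by (intros; ring).
    rewrite csum_add, csum_scal_l, G. fold u. ring. }
  assert (HS : csum (fun k => frac_coef N k * Z ^ S k) N = Z * ((INR N - 2) * u - V)).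
  { rewrite (csum_ext _ (fun k => Z * ((INR N - 2) * (INR k * Z ^ k) + -1 * (INR k ^ 2 * Z ^ k)))).
    2:{ intros k _. unfold frac_coef. rewrite RtoC_minus, !RtoC_mult, RtoC_minus, RtoC_pow, (Cpow_S Z).
        ring. }
    rewrite csum_scal_l, csum_add, !csum_scal_l. fold u V. ring. }
  assert (Hkey : (Z - 1) ^ 2 * ((INR N - 2) * u - V) = 2 * INR N).
  { transitivity ((INR N - 2) * (Z - 1) * ((Z - 1) * u) - (Z - 1) * ((Z - 1) * V)); [simpl; ring|].
    rewrite HV, Hu.
    transitivity (2 * ((Z - 1) * u) + (Z - 1) * ((INR N - 2) * INR N - (INR N - 1) ^ 2 + 1));
      [ring|].
    rewrite Hu. ring. }
  assert (Hd : Z - 1 <> 0) by (apply Cminus_eq_contra, HZ1).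
  assert (HN' : RtoC (INR N) <> 0) by (intro E; apply RtoC_inj in E; revert E; apply not_0_INR; lia).
  rewrite HS. clearbody u V.
  replace ((INR N - 2) * u - V) with (2 * INR N / (Z - 1) ^ 2)
    by (rewrite <- Hkey; field; exact Hd).
  field. auto.
Qed.

Lemma sum_frac_coef N M : csum (fun k => RtoC (frac_coef N k)) M
  = RtoC ((INR N - 2) * (INR M * (INR M - 1) / 2) - (INR M - 1) * INR M * (2 * INR M - 1) / 6).
Proof.
  induction M as [|M IH]; cbn [csum].
  - f_equal. simpl. field.
  - rewrite IH, <- RtoC_plus. f_equal. unfold frac_coef. rewrite S_INR. field.
Qed.

Lemma sum_root_div_sub1_sq N : (1 < N)%nat ->
  csum (fun n => root N (S n) / (root N (S n) - 1) ^ 2) (N - 1) = RtoC (- (INR N ^ 2 - 1) / 12).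
Proof.
  intro HN.
  rewrite (csum_ext _ (fun n =>
             / (2 * INR N) * csum (fun k => frac_coef N k * root N (S n) ^ S k) N)).
  2:{ intros n Hn.
      apply div_sub1_sq_expansion; [lia | apply root_pow_order; lia | apply root_neq1; lia]. }
  rewrite csum_scal_l, csum_swap.
  rewrite (csum_ext _ (fun k => frac_coef N k * (csum (fun j => root N j ^ S k) N - 1))).
  2:{ intros k _. rewrite csum_scal_l, sum_nontrivial_roots_pow by lia. reflexivity. }
  destruct N as [|M]; [lia|]. rewrite csum_S.
  rewrite (csum_ext _ (fun k => -1 * RtoC (frac_coef (S M) k))).
  2:{ intros k Hk. rewrite sum_roots_pow by lia. ring. }
  rewrite (csum_ext (fun j => root (S M) j ^ S M) (fun _ => 1)) by (intros; apply root_pow_order; lia).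
  rewrite csum_scal_l, sum_frac_coef, csum_const.
  unfold frac_coef. rewrite S_INR.
  assert (HM : RtoC (INR M + 1) <> 0) by (intro E; apply RtoC_inj in E; pose proof (pos_INR M); lra).
  rewrite RtoC_plus in HM.
  repeat first [ rewrite RtoC_minus | rewrite RtoC_mult | rewrite RtoC_plus | rewrite RtoC_pow
               | rewrite RtoC_opp | rewrite RtoC_div by lra ].
  field. exact HM.
Qed.

Definition cot_kernel (p : nat) (x : C) : C := x * (x ^ p + 1) / ((x ^ p - 1) * (x ^ 2 - 1)).
Definition cross_term (x y : C) : C := x * (x + y) / ((x - y) * (x ^ 2 - 1)).
(* For x = exp(2it): csc_part x = 1 / (2i sin 2t) and cot_part x = -i cot 2t. *)
Definition cot_part (x : C) : C := (x ^ 2 + 1) / (x ^ 2 - 1).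
Definition csc_part (x : C) : C := x / (x ^ 2 - 1).

Lemma cot_kernel_expansion p x : (0 < p)%nat -> x ^ p <> 1 -> x ^ 2 <> 1 ->
  INR p * cot_kernel p x = x / (x - 1) ^ 2 + csum (fun m => cross_term x (root p (S m))) (p - 1).
Proof.
  intros Hp Hxp Hx2.
  assert (Hdp : x ^ p - 1 <> 0) by (apply Cminus_eq_contra, Hxp).
  assert (Hfac : x ^ 2 - 1 = (x - 1) * (x + 1)) by (simpl; ring).
  assert (Hd2 : (x - 1) * (x + 1) <> 0) by (rewrite <- Hfac; apply Cminus_eq_contra, Hx2).
  assert (Hd1 : x - 1 <> 0) by (intro E; apply Hd2; rewrite E; ring).
  assert (Hd1' : x + 1 <> 0) by (intro E; apply Hd2; rewrite E; ring).
  replace (INR p * cot_kernel p x) with (csc_part x * (INR p * ((x ^ p + 1) / (x ^ p - 1))))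
    by (unfold cot_kernel, csc_part; rewrite Hfac; field; auto).
  rewrite coth_partial_fractions, <- csum_scal_l by assumption.
  destruct p as [|p]; [lia|]. rewrite csum_shift, root_0, Nat.sub_1_r. simpl pred.
  unfold csc_part, cross_term. rewrite Hfac. f_equal.
  - field. auto.
  - apply csum_ext. intros m _. assert (Hxz : x - root (S p) (S m) <> 0).
    { intro E. apply Hxp. apply Ceq_minus in E. rewrite E. apply root_pow_order. lia. }
    field. auto.
Qed.

Lemma cross_term_antisym x y : x <> y -> x ^ 2 <> 1 -> y ^ 2 <> 1 ->
  cross_term x y + cross_term y x = - (cot_part x * csc_part y + csc_part x * cot_part y).
Proof.
  intros Hxy Hx Hy. unfold cross_term, cot_part, csc_part.
  assert (x - y <> 0) by (apply Cminus_eq_contra, Hxy).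
  assert (y - x <> 0) by (apply Cminus_eq_contra; auto).
  assert (x ^ 2 - 1 <> 0) by (apply Cminus_eq_contra, Hx).
  assert (y ^ 2 - 1 <> 0) by (apply Cminus_eq_contra, Hy).
  field. auto.
Qed.

Lemma csc_part_inv x y : x * y = 1 -> x ^ 2 <> 1 -> csc_part y = - csc_part x.
Proof.
  intros Hxy Hx. unfold csc_part.
  assert (Hx0 : x <> 0) by (intro E; rewrite E, Cmult_0_l in Hxy; apply RtoC_inj in Hxy; lra).
  replace y with (/ x) by (rewrite <- (Cmult_1_r (/ x)), <- Hxy; field; exact Hx0).
  assert (x ^ 2 - 1 <> 0) by (apply Cminus_eq_contra, Hx).
  assert (1 - x ^ 2 <> 0) by (apply Cminus_eq_contra; auto).
  field. auto.
Qed.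

Lemma sum_csc_part_roots N : (1 < N)%nat -> Nat.odd N = true ->
  csum (fun n => csc_part (root N (S n))) (N - 1) = 0.
Proof.
  intros HN Ho. set (T := csum _ (N - 1)).
  assert (Hneg : T = - T).
  { unfold T at 1. rewrite <- csum_rev.
    rewrite (csum_ext _ (fun k => -1 * csc_part (root N (S k)))).
    { rewrite csum_scal_l. fold T. ring. }
    intros k Hk. replace (S (N - 1 - 1 - k)) with (N - S k)%nat by lia.
    rewrite (csc_part_inv (root N (S k))).
    - ring.
    - rewrite Cmult_comm. apply root_mul_reflect; lia.
    - apply root_sq_neq1; [lia | exact Ho]. }
  replace T with ((T - - T) / 2) by field. rewrite <- Hneg. field.
Qed.

Lemma sum_cross_terms_cancel p q : (1 < p)%nat -> (1 < q)%nat ->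
  Nat.odd p = true -> Nat.odd q = true -> Nat.gcd q p = 1%nat ->
  csum (fun n => csum (fun m => cross_term (root q (S n)) (root p (S m))) (p - 1)) (q - 1)
  + csum (fun n => csum (fun m => cross_term (root p (S m)) (root q (S n))) (p - 1)) (q - 1) = 0.
Proof.
  intros Hp Hq Hop Hoq Hqp. rewrite <- csum_add.
  rewrite (csum_ext _ (fun n =>
             csum (fun m => (- cot_part (root q (S n))) * csc_part (root p (S m))) (p - 1)
             + csum (fun m => csc_part (root q (S n)) * (- cot_part (root p (S m)))) (p - 1))).
  2:{ intros n Hn. rewrite <- !csum_add. apply csum_ext. intros m Hm.
      rewrite cross_term_antisym.
      - ring.
      - apply root_neq_root; auto; lia.
      - apply root_sq_neq1; auto; lia.
      - apply root_sq_neq1; auto; lia. }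
  rewrite csum_add, !csum_mul_csum, !sum_csc_part_roots by assumption. ring.
Qed.

Lemma sum_cot_kernel_reciprocity p q : (1 < p)%nat -> (1 < q)%nat ->
  Nat.odd p = true -> Nat.odd q = true -> Nat.gcd p q = 1%nat ->
  INR p * csum (fun n => cot_kernel p (root q (S n))) (q - 1)
  + INR q * csum (fun m => cot_kernel q (root p (S m))) (p - 1)
  = RtoC (- (INR p ^ 2 + INR q ^ 2 - 2) / 12).
Proof.
  intros Hp Hq Hop Hoq Hpq.
  assert (Hqp : Nat.gcd q p = 1%nat) by (rewrite Nat.gcd_comm; exact Hpq).
  rewrite <- !csum_scal_l.
  rewrite (csum_ext _ (fun n => root q (S n) / (root q (S n) - 1) ^ 2
             + csum (fun m => cross_term (root q (S n)) (root p (S m))) (p - 1)) (q - 1))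
    by (intros; apply cot_kernel_expansion;
        [lia | apply root_pow_neq1 | apply root_sq_neq1]; auto; lia).
  rewrite (csum_ext _ (fun m => root p (S m) / (root p (S m) - 1) ^ 2
             + csum (fun n => cross_term (root p (S m)) (root q (S n))) (q - 1)) (p - 1))
    by (intros; apply cot_kernel_expansion;
        [lia | apply root_pow_neq1 | apply root_sq_neq1]; auto; lia).
  rewrite !csum_add, (csum_swap (fun m n => cross_term (root p (S m)) (root q (S n)))).
  rewrite !sum_root_div_sub1_sq by assumption.
  match goal with |- ?A + ?D1 + (?B + ?D2) = _ =>
    transitivity (A + B + (D1 + D2)); [ring|] end.
  rewrite sum_cross_terms_cancel, Cplus_0_r, <- RtoC_plus by assumption.
  f_equal. field.
Qed.

Lemma Ci_sq : Ci * Ci = -1.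
Proof. unfold Ci, Cmult, RtoC. simpl. f_equal; ring. Qed.

Lemma cot_expi a : sin a <> 0%R -> RtoC (cot a) = Ci * (expi (2 * a) + 1) / (expi (2 * a) - 1).
Proof.
  intro Hs. rewrite expi_double_add1, expi_double_sub1.
  assert (RtoC (sin a) <> 0) by (intro E; apply RtoC_inj in E; auto).
  assert (Hi := Ci_nz). assert (He := expi_neq0 a).
  unfold cot. rewrite RtoC_div, !RtoC_mult by exact Hs. field. auto.
Qed.

Lemma inv_sin_expi s : sin s <> 0%R -> RtoC (/ sin s) = 2 * Ci * expi s / (expi (2 * s) - 1).
Proof.
  intro Hs. rewrite expi_double_sub1.
  assert (RtoC (sin s) <> 0) by (intro E; apply RtoC_inj in E; auto).
  assert (Hi := Ci_nz). assert (He := expi_neq0 s).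
  rewrite RtoC_inv, RtoC_mult by exact Hs. field. auto.
Qed.

Lemma cot_mul_cot_div_cos2 p t : expi (2 * t) ^ p <> 1 -> expi (2 * t) ^ 2 <> 1 ->
  RtoC (cot (INR p * t) * cot t / cos t ^ 2) = -4 * cot_kernel p (expi (2 * t)).
Proof.
  intros Hxp Hx2.
  assert (Ep : expi (2 * t) ^ p = expi (2 * (INR p * t))) by (rewrite expi_pow; f_equal; ring).
  assert (E2 : expi (2 * t) ^ 2 = expi (2 * (2 * t))) by (rewrite expi_pow; f_equal; simpl; ring).
  rewrite Ep in Hxp. rewrite E2 in Hx2.
  assert (Sp := sin_neq0_of_expi _ Hxp). assert (S2 := sin_neq0_of_expi _ Hx2).
  assert (St : sin t <> 0%R) by (intro E; apply S2; rewrite sin_2a, E; ring).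
  assert (Ct : cos t <> 0%R) by (intro E; apply S2; rewrite sin_2a, E; ring).
  replace (cot (INR p * t) * cot t / cos t ^ 2)%R with (cot (INR p * t) * (2 * / sin (2 * t)))%R
    by (unfold cot; rewrite sin_2a; field; auto).
  rewrite !RtoC_mult, cot_expi, inv_sin_expi by assumption.
  unfold cot_kernel. rewrite Ep, E2.
  assert (Hdp : expi (2 * (INR p * t)) - 1 <> 0) by (apply Cminus_eq_contra, Hxp).
  assert (Hd2 : expi (2 * (2 * t)) - 1 <> 0) by (apply Cminus_eq_contra, Hx2).
  transitivity (4 * (Ci * Ci) * (expi (2 * t) * (expi (2 * (INR p * t)) + 1)
                                 / ((expi (2 * (INR p * t)) - 1) * (expi (2 * (2 * t)) - 1))));
    [field; auto | rewrite Ci_sq; ring].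
Qed.

Lemma cot_term_root p q n : (0 < n < q)%nat -> Nat.odd q = true -> Nat.gcd q p = 1%nat ->
  RtoC (cot (PI * INR n * INR p / INR q) * cot (PI * INR n / INR q)
        / cos (PI * INR n / INR q) ^ 2)
  = -4 * cot_kernel p (root q n).
Proof.
  intros Hn Ho Hg.
  assert (Hr : root q n = expi (2 * (PI * INR n / INR q)))
    by (unfold root; f_equal; unfold Rdiv; ring).
  replace (PI * INR n * INR p / INR q)%R with (INR p * (PI * INR n / INR q))%R
    by (unfold Rdiv; ring).
  rewrite Hr. apply cot_mul_cot_div_cos2; rewrite <- Hr;
    [apply root_pow_neq1 | apply root_sq_neq1]; auto.
Qed.

Close Scope C_scope.

Theorem mainTheorem17 (p q : nat) :
  (3 <= p)%nat -> (3 <= q)%nat -> Nat.odd p = true -> Nat.odd q = true ->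
  Nat.gcd p q = 1%nat ->
  INR p * sum_upto (fun n => cot (PI * INR n * INR p / INR q) * cot (PI * INR n / INR q)
                              / (cos (PI * INR n / INR q)) ^ 2) (q - 1)
  + INR q * sum_upto (fun n => cot (PI * INR n * INR q / INR p) * cot (PI * INR n / INR p)
                              / (cos (PI * INR n / INR p)) ^ 2) (p - 1)
  = / 3 * (INR p ^ 2 + INR q ^ 2 - 2).
Proof.
  intros Hp Hq Hop Hoq Hpq.
  assert (Hqp : Nat.gcd q p = 1%nat) by (rewrite Nat.gcd_comm; exact Hpq).
  apply RtoC_inj. rewrite RtoC_plus, !RtoC_mult, !csum_RtoC_sum_upto.
  rewrite (csum_ext _ (fun n => -4 * cot_kernel p (root q (S n)))%C (q - 1))
    by (intros; apply cot_term_root; auto; lia).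
  rewrite (csum_ext _ (fun m => -4 * cot_kernel q (root p (S m)))%C (p - 1))
    by (intros; apply cot_term_root; auto; lia).
  rewrite !csum_scal_l.
  match goal with |- (?P * (?c * ?A) + ?Q * (?c * ?B))%C = _ =>
    transitivity (c * (P * A + Q * B))%C; [ring|] end.
  rewrite sum_cot_kernel_reciprocity, <- !RtoC_mult by (auto; lia).
  f_equal. field.
Qed.
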